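(* Let $\gamma\in(0,1)$ be a discount factor, $H\ge 1$ a planning horizon, $f$ the true (stochastic) transition map and $f_\phi$ an approximate transition map such that for every state–action pair $(x,u)$ the total variation distance between $f(\cdot\mid x,u)$ and $f_\phi(\cdot\mid x,u)$ is at most $\epsilon_f$. For a state $x_t$ and a control-distribution parameter $\tilde\eta_t$, let $$J(x_t,\tilde\eta_t)=\mathbb{E}_{\mathbf{u}_t\sim\pi_{\tilde\eta_t},\,\mathbf{x}_t\sim f_\phi}\big[C(\mathbf{x}_t,\mathbf{u}_t)\big],\qquad J_r(x_t,\tilde\eta_t)=\mathbb{E}_{\mathbf{u}_t\sim\pi_{\tilde\eta_t},\,\mathbf{x}_t\sim f}\big[C(\mathbf{x}_t,\mathbf{u}_t)\big],$$ where $C(\mathbf{x}_t,\mathbf{u}_t)=\sum_{h=0}^{H-1}\gamma^h c(x_{t,h},u_{t,h})+\gamma^H c_H(x_{t,H})$ with $c=-r$ and terminal cost $c_H(x)=-V_\zeta(x)$. Suppose $|c|\le c_{max}$ and $|V_\zeta|\le V_{max}$. Then $$J(x_t,\tilde\eta_t)-J_r(x_t,\tilde\eta_t)\le 2c_{max}\frac{(H-1)\gamma^{H+1}-H\gamma^H+\gamma}{(1-\gamma)^2}\,\epsilon_f+2\gamma^H V_{max}H\epsilon_f=:R_{f,H}.$$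
   Context: Setting: a Markov decision process with state set $\mathcal{X}\subset\mathbb{R}^n$, action set $\mathcal{U}\subset\mathbb{R}^m$, reward $r:\mathcal{X}\times\mathcal{U}\to\mathbb{R}$. An $H$-step rollout from $x_t$ consists of states $\mathbf{x}_t=(x_{t,0},\dots,x_{t,H})$ with $x_{t,0}=x_t$ and controls $\mathbf{u}_t=(u_{t,0},\dots,u_{t,H-1})$, where $\mathbf{u}_t$ is sampled from a control distribution $\pi_{\tilde\eta_t}$ (parameterized by $\tilde\eta_t=(\tilde\eta_{t,0},\dots,\tilde\eta_{t,H-1})$) and $x_{t,h+1}\sim f_\phi(x_{t,h},u_{t,h})$ (for $J$) or $x_{t,h+1}\sim f(x_{t,h},u_{t,h})$ (for $J_r$). $V_\zeta$ is a value-function estimate used as terminal reward. $c_{max}$ bounds the stage cost and $V_{max}$ bounds the value function. *)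

From HB Require Import structures.
From mathcomp Require Import all_boot all_order all_algebra.
From mathcomp Require Import all_classical all_reals all_analysis.
Set Implicit Arguments. Unset Strict Implicit. Unset Printing Implicit Defensive.
Import Order.TTheory GRing.Theory Num.Theory.
Local Open Scope classical_set_scope.
Local Open Scope ring_scope.
Local Open Scope ereal_scope.

Definition tv_dist (d : measure_display) (X : measurableType d) (R : realType)
  (P Q : set X -> \bar R) : \bar R :=
  ereal_sup [set `|P A - Q A| | A in [set A | measurable A]].

Definition stage_cost (X U : Type) (R : realType) (r : X -> U -> R) : X -> U -> R :=
  fun x u => (- r x u)%R.
Definition terminal_cost (X : Type) (R : realType) (V : X -> R) : X -> R :=
  fun x => (- V x)%R.

(* Expected discounted cost-to-go of a rollout under the fixed control
   sequence u (u h = control at step h), for transition kernel k: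
   rollout_ctg n h x = E[ sum_{j=h}^{h+n-1} gamma^j c(x_j,u_j) + gamma^(h+n) c_H(x_{h+n}) | x_h = x ],
   with x_{j+1} ~ k(x_j,u_j). *)
Fixpoint rollout_ctg (dx du : measure_display) (X : measurableType dx)
  (U : measurableType du) (R : realType) (k : R.-pker (X * U) ~> X)
  (c : X -> U -> R) (cH : X -> R) (gamma : R) (u : nat -> U)
  (n h : nat) (x : X) : \bar R :=
  match n with
  | 0%N => (gamma ^+ h * cH x)%:E
  | n'.+1 => (gamma ^+ h * c x (u h))%:E
             + \int[k (x, u h)]_y rollout_ctg k c cH gamma u n' h.+1 y
  end.

(* J(x_t, eta) = E_{u ~ pi_eta, x ~ k}[C(x,u)], where the control sequence is
   drawn from pi (a probability on a space S of control sequences) and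
   ctrl h s is the h-th control of the sequence s. *)
Definition expected_cost (dx du ds : measure_display) (X : measurableType dx)
  (U : measurableType du) (S : measurableType ds) (R : realType)
  (k : R.-pker (X * U) ~> X) (r : X -> U -> R) (V : X -> R) (gamma : R)
  (H : nat) (pi : probability S R) (ctrl : nat -> S -> U) (x0 : X) : \bar R :=
  \int[pi]_s rollout_ctg k (stage_cost r) (terminal_cost V) gamma
                 (fun h => ctrl h s) H 0 x0.

From HB Require Import structures.
From mathcomp Require Import all_boot all_order all_algebra.
From mathcomp Require Import all_classical all_reals all_analysis.
From mathcomp Require Import measurable_realfun.
From mathcomp Require Import ring lra.
Import Order.TTheory GRing.Theory Num.Theory.
Local Open Scope classical_set_scope.
Local Open Scope ring_scope.
Set Implicit Arguments. Unset Strict Implicit. Unset Printing Implicit Defensive.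

(* If two
   probability measures are [e]-close in total variation, the integrals of a
   measurable [g] with [|g| <= M] differ by at most [2 M e]: shift [g] into
   [0 <= g + M <= 2 M] and approximate it from below by staircase functions,
   whose integrals are finite sums of measures of superlevel sets.  At step [h]
   the gap between the two tail costs splits into a same-kernel term, handled
   by induction, and a same-continuation term, bounded by [2 e] times the sup
   [gamma^h (cmax (1 + ... + gamma^(n-1)) + gamma^n Vmax)] of a tail cost.
   Summing gives [2 e (cmax \sum_(j < H) j gamma^j + H gamma^H Vmax)], and this
   arithmetico-geometric sum has the stated closed form. *)

Section staircase.
Variable R : realType.
Implicit Types (dl t : R) (N : nat).

Definition staircase dl N t := \sum_(k < N) (if k.+1%:R * dl <= t then dl else 0).

Lemma staircaseS dl N t :
  staircase dl N.+1 t = staircase dl N t + (if N.+1%:R * dl <= t then dl else 0).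
Proof. by rewrite /staircase big_ord_recr. Qed.

Lemma staircase_le_mul dl N t : 0 < dl -> staircase dl N t <= N%:R * dl.
Proof.
move=> dl0; elim: N => [|N IH]; first by rewrite /staircase big_ord0 mul0r.
rewrite staircaseS -natr1 mulrDl mul1r lerD //.
by case: ifP => // _; exact: ltW.
Qed.

Lemma staircase_full dl N t : 0 < dl -> N%:R * dl <= t -> staircase dl N t = N%:R * dl.
Proof.
move=> dl0; elim: N => [|N IH]; first by rewrite /staircase big_ord0 mul0r.
move=> Nt; rewrite staircaseS Nt IH; first by rewrite -natr1 mulrDl mul1r.
by apply: le_trans Nt; rewrite ler_pM2r // ler_nat.
Qed.

Lemma staircase_le dl N t : 0 < dl -> 0 <= t -> staircase dl N t <= t.
Proof.
move=> dl0 t0; elim: N => [|N IH]; first by rewrite /staircase big_ord0.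
rewrite staircaseS; case: ifPn => Nt; last by rewrite addr0.
apply: le_trans Nt; rewrite -natr1 mulrDl mul1r lerD2r.
exact: staircase_le_mul.
Qed.

Lemma staircase_ge dl N t : 0 < dl -> t <= N%:R * dl -> t - dl <= staircase dl N t.
Proof.
move=> dl0; elim: N => [|N IH] tN.
  by rewrite /staircase big_ord0 subr_le0 (le_trans tN) // mul0r ltW.
have le_stairS : staircase dl N t <= staircase dl N.+1 t.
  by rewrite staircaseS lerDl; case: ifP => // _; exact: ltW.
apply: le_trans le_stairS; have [Nt|Nt] := leP t (N%:R * dl); first exact: IH.
rewrite staircase_full //; last exact: ltW.
by rewrite lerBlDr -[X in _ + X]mul1r -mulrDl natr1.
Qed.
End staircase.

Lemma measurable_superlevel d (T : measurableType d) (R : realType)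
    (h : T -> R) (a : R) :
  measurable_fun setT h -> measurable [set x | a <= h x].
Proof.
move=> mh; rewrite (_ : [set x | _] = h @^-1` `[a, +oo[).
  by rewrite -[X in measurable X]setTI; exact: mh (measurable_itv _).
by apply/seteqP; split => x /=; rewrite in_itv /= andbT.
Qed.

Section probability_integrals.
Context d (T : measurableType d) (R : realType).
Variable mu : {measure set T -> \bar R}.
Hypothesis mu1 : mu setT = 1%E.

Lemma prob_setT_neq0 : [set: T] !=set0.
Proof.
apply/set0P/negP => /eqP T0; move: mu1; rewrite T0 measure0.
by move/(congr1 fine) => /= /eqP; rewrite eq_sym oner_eq0.
Qed.

Lemma prob_fin_num A : measurable A -> mu A \is a fin_num.
Proof.
move=> mA; rewrite ge0_fin_numE // (le_lt_trans _ (ltry 1)) // -mu1.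
by apply: le_measure; rewrite ?inE.
Qed.

Lemma bounded_integrable (g : T -> R) (B : R) :
  measurable_fun setT g -> (forall x, `|g x| <= B) -> mu.-integrable setT (EFin \o g).
Proof.
move=> mg gB; apply: measurable_bounded_integrable => //; first by rewrite mu1 ltry.
exists B; split; first exact: num_real.
by move=> M BM x _; exact: le_trans (gB x) (ltW BM).
Qed.

Lemma Rintegral_cst_prob (a : R) : \int[mu]_x a = a.
Proof. by rewrite Rintegral_cst // mu1 mulr1. Qed.

Lemma Rintegral_staircase (h : T -> R) dl N : measurable_fun setT h -> 0 <= dl ->
  \int[mu]_x staircase dl N (h x) =
  \sum_(j < N) dl * fine (mu [set x | j.+1%:R * dl <= h x]).
Proof.
move=> mh dl0; set A := fun j : nat => [set x | j.+1%:R * dl <= h x].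
have mA j : measurable (A j) by exact: measurable_superlevel.
have stepE j x : (if j.+1%:R * dl <= h x then dl else 0) = dl * \1_(A j) x.
  rewrite indicE; case: ifPn => hx; first by rewrite mem_set ?mulr1.
  by rewrite memNset ?mulr0 //; apply/negP.
transitivity (fine (\int[mu]_x (\sum_(j < N) (dl * \1_(A j) x)%:E))).
  congr fine; apply: eq_integral => x _; rewrite sumEFin; congr EFin.
  by apply: eq_bigr => j _; exact: stepE.
rewrite ge0_integral_sum //; last 2 first.
- by move=> j; apply/measurable_EFinP/measurable_funM.
- by move=> j x _; rewrite lee_fin mulr_ge0.
rewrite (eq_bigr (fun j : 'I_N => (dl * fine (mu (A j)))%:E)) ?sumEFin // => j _.
under eq_integral do rewrite EFinM.
rewrite ge0_integralZl //; last exact/measurable_EFinP.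
by rewrite integral_indic // setIT EFinM fineK ?prob_fin_num.
Qed.

Lemma Rintegral_le_cst (g : T -> R) (B a : R) : measurable_fun setT g ->
  (forall x, `|g x| <= B) -> (forall x, g x <= a) -> \int[mu]_x g x <= a.
Proof.
move=> mg gB ga; rewrite -[leRHS]Rintegral_cst_prob.
apply: le_Rintegral => //; first exact: (bounded_integrable mg gB).
exact: (bounded_integrable (measurable_cst a) (fun=> lexx `|a|)).
Qed.

Lemma norm_Rintegral_le (g : T -> R) (B : R) : measurable_fun setT g ->
  (forall x, `|g x| <= B) -> `|\int[mu]_x g x| <= B.
Proof.
move=> mg gB; apply: le_trans (le_normr_Rintegral _ _) _ => //.
  exact: (bounded_integrable mg gB).
apply: (Rintegral_le_cst (B := B)) => // [|x]; first exact: measurableT_comp.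
by rewrite normr_id.
Qed.

Lemma Rintegral_sub_le_cst (g1 g2 : T -> R) (B a : R) :
  measurable_fun setT g1 -> measurable_fun setT g2 ->
  (forall x, `|g1 x| <= B) -> (forall x, `|g2 x| <= B) ->
  (forall x, g1 x - g2 x <= a) -> \int[mu]_x g1 x - \int[mu]_x g2 x <= a.
Proof.
move=> mg1 mg2 g1B g2B g12a.
rewrite -RintegralB //; last 2 first.
- exact: (bounded_integrable mg1 g1B).
- exact: (bounded_integrable mg2 g2B).
apply: (Rintegral_le_cst (B := B + B)) => // [|x]; first exact: measurable_funB.
by rewrite (le_trans (ler_normB _ _)) // lerD.
Qed.

End probability_integrals.

Lemma tv_distC d (T : measurableType d) (R : realType) (P Q : set T -> \bar R) :
  tv_dist P Q = tv_dist Q P.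
Proof.
suff abseC (x y : \bar R) : (`|x - y| = `|y - x|)%E.
  by rewrite /tv_dist; congr ereal_sup; apply/seteqP; split=> _ [A mA <-];
    exists A => //; rewrite abseC.
by case: x y => [x||] [y||] //=; rewrite distrC.
Qed.

Section integral_tv_bound.
Context d (T : measurableType d) (R : realType).
Variables (mu nu : {measure set T -> \bar R}) (e : R).
Hypotheses (mu1 : mu setT = 1%E) (nu1 : nu setT = 1%E).
Hypothesis tv : (tv_dist mu nu <= e%:E)%E.

Lemma measure_dist_le_tv A : measurable A -> `|fine (mu A) - fine (nu A)| <= e.
Proof.
move=> mA; rewrite -lee_fin -abse_EFin EFinB !fineK ?prob_fin_num //.
by apply: le_trans tv; apply: ereal_sup_ubound; exists A.
Qed.

Lemma tv_bound_ge0 : 0 <= e.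
Proof. exact: le_trans (measure_dist_le_tv measurable0). Qed.

Lemma Rintegral_staircase_sub_le (h : T -> R) dl N :
  measurable_fun setT h -> 0 <= dl ->
  \int[mu]_x staircase dl N (h x) - \int[nu]_x staircase dl N (h x) <= N%:R * dl * e.
Proof.
move=> mh dl0; rewrite !Rintegral_staircase // -sumrB.
have -> : N%:R * dl * e = \sum_(j < N) dl * e.
  by rewrite sumr_const card_ord -mulrA mulr_natl.
apply: ler_sum => j _.
rewrite -mulrBr ler_wpM2l //.
by apply: le_trans (ler_norm _) (measure_dist_le_tv _); exact: measurable_superlevel.
Qed.

Lemma Rintegral_sub_le_tv_nonneg (h : T -> R) L :
  measurable_fun setT h -> (forall x, 0 <= h x <= L) ->
  \int[mu]_x h x - \int[nu]_x h x <= L * e.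
Proof.
move=> mh hL; have [x0 _] := prob_setT_neq0 mu1.
have L0 : 0 <= L by case/andP: (hL x0); exact: le_trans.
have e0 := tv_bound_ge0.
apply/ler_addgt0Pr => eps eps0.
(* A staircase of mesh dl below h loses L e + dl (e + 1) = L e + eps. *)
pose dl := eps / (e + 1); have dl0 : 0 < dl by rewrite divr_gt0 // ltr_wpDl.
pose N := (Num.truncn (L / dl)).+1.
have [LN NL] : L <= N%:R * dl /\ N%:R * dl <= L + dl.
  have /andP[tL Lt] := truncn_itv (divr_ge0 L0 (ltW dl0)).
  split; first by rewrite ltW // -ltr_pdivrMr.
  by rewrite -natr1 mulrDl mul1r lerD2r -ler_pdivlMr.
pose hN x := staircase dl N (h x).
have mhN : measurable_fun setT hN.
  apply: measurable_sum => j; apply: measurable_fun_ifT => //.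
  exact: measurable_fun_ler.
have hN_norm x : `|hN x| <= L + dl.
  rewrite ger0_norm; first exact: le_trans (staircase_le_mul _ _ dl0) NL.
  by rewrite /hN /staircase sumr_ge0 // => j _; case: ifP => // _; exact: ltW.
have h_norm x : `|h x| <= L + dl.
  by case/andP: (hL x) => h0 hxL; rewrite ger0_norm // ler_wpDr // ltW.
have mu_h : \int[mu]_x h x - \int[mu]_x hN x <= dl.
  apply: (Rintegral_sub_le_cst mu1 mh mhN h_norm hN_norm) => x.
  by rewrite lerBlDl -lerBlDr staircase_ge // (le_trans _ LN) //; case/andP: (hL x).
have nu_h : \int[nu]_x hN x - \int[nu]_x h x <= 0.
  apply: (Rintegral_sub_le_cst nu1 mhN mh hN_norm h_norm) => x.
  by rewrite subr_le0 staircase_le //; case/andP: (hL x).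
have := Rintegral_staircase_sub_le N mh (ltW dl0).
have : N%:R * dl * e <= (L + dl) * e by rewrite ler_wpM2r.
have : dl * (e + 1) = eps by rewrite /dl mulfVK // gt_eqF // ltr_wpDl.
rewrite -/hN; lra.
Qed.

Lemma Rintegral_sub_le_tv (g : T -> R) (M : R) :
  measurable_fun setT g -> (forall x, `|g x| <= M) ->
  \int[mu]_x g x - \int[nu]_x g x <= 2 * M * e.
Proof.
move=> mg gM; pose h x := g x + M.
have shiftE (m : {measure set T -> \bar R}) : m setT = 1%E ->
    \int[m]_x h x = \int[m]_x g x + M.
  move=> m1; rewrite RintegralD ?Rintegral_cst_prob //.
    exact: (bounded_integrable m1 mg gM).
  exact: (bounded_integrable m1 (measurable_cst M) (fun=> lexx `|M|)).
have hM x : 0 <= h x <= 2 * M.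
  by have := gM x; rewrite ler_norml /h => /andP[? ?]; apply/andP; split; lra.
have := Rintegral_sub_le_tv_nonneg (measurable_funD mg (measurable_cst M)) hM.
by rewrite -/h !shiftE // opprD addrACA subrr addr0.
Qed.
End integral_tv_bound.

Lemma measurable_fun_Rintegral_kernel d d' (X : measurableType d)
    (Y : measurableType d') (R : realType) (l : R.-fker X ~> Y) (f : X * Y -> R) :
  measurable_fun setT f -> measurable_fun setT (fun x => \int[l x]_y f (x, y)).
Proof.
move=> mf; pose F p := (f p)%:E.
have mF : measurable_fun setT F by exact/measurable_EFinP.
rewrite (_ : (fun x => _) =
    fun x => fine (\int[l x]_y F^\+ (x, y) - \int[l x]_y F^\- (x, y))%E); last first.
  apply/funext => x; rewrite /Rintegral integralE.
  by congr (fine (_ - _)); apply: eq_integral => y _; rewrite ?funeposE ?funenegE.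
apply: measurableT_comp => //; apply: emeasurable_funB.
  by apply: measurable_fun_integral_finite_kernel => //; exact: measurable_funepos.
by apply: measurable_fun_integral_finite_kernel => //; exact: measurable_funeneg.
Qed.

Definition kprecomp dw dx dy (W : measurableType dw) (X : measurableType dx)
    (Y : measurableType dy) (R : realType) (k : R.-pker X ~> Y) (phi : W -> X)
    of measurable_fun setT phi : W -> {measure set Y -> \bar R} :=
  fun w => k (phi w).

Section kprecomp_kernel.
Context dw dx dy (W : measurableType dw) (X : measurableType dx)
  (Y : measurableType dy) (R : realType).
Variables (k : R.-pker X ~> Y) (phi : W -> X) (mphi : measurable_fun setT phi).

Let measurable_kprecomp A : measurable A -> measurable_fun setT (kprecomp k mphi ^~ A).
Proof. by move=> mA; exact: measurableT_comp (measurable_kernel k _ mA) mphi. Qed.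

HB.instance Definition _ :=
  isKernel.Build _ _ _ _ _ (kprecomp k mphi) measurable_kprecomp.

HB.instance Definition _ :=
  Kernel_isProbability.Build _ _ _ _ _ (kprecomp k mphi) (fun w => prob_kernel (phi w)).
End kprecomp_kernel.

Section rollout.
Context (dx du ds : measure_display) (X : measurableType dx)
  (U : measurableType du) (S : measurableType ds) (R : realType).
Variables (c : X -> U -> R) (cH : X -> R) (gamma : R) (ctrl : nat -> S -> U).
Hypotheses (mc : measurable_fun setT (fun xu : X * U => c xu.1 xu.2))
  (mcH : measurable_fun setT cH) (mctrl : forall h, measurable_fun setT (ctrl h)).

(* [rollout_ctg] with the control sequence read off a sample [s : S], as a real
   function of [(s, x)]: joint measurability is what allows integrating in [s]. *)
Fixpoint rollout_ctgR (k : R.-pker (X * U) ~> X) (n h : nat) (z : S * X) : R :=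
  match n with
  | 0%N => gamma ^+ h * cH z.2
  | n.+1 => gamma ^+ h * c z.2 (ctrl h z.1) +
            \int[k (z.2, ctrl h z.1)]_y rollout_ctgR k n h.+1 (z.1, y)
  end.

Let measurable_step h : measurable_fun setT (fun z : S * X => (z.2, ctrl h z.1)).
Proof. exact: measurable_fun_pair (measurableT_comp (mctrl h) measurable_fst). Qed.

Lemma measurable_rollout_ctgR k n h : measurable_fun setT (rollout_ctgR k n h).
Proof.
elim: n h => [|n IH] h /=.
  by apply: measurable_funM => //; exact: measurableT_comp mcH measurable_snd.
apply: measurable_funD.
  by apply: measurable_funM => //; exact: measurableT_comp mc (measurable_step h).
apply: (measurable_fun_Rintegral_kernel (kprecomp k (measurable_step h))
  (f := fun p => rollout_ctgR k n h.+1 (p.1.1, p.2))).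
apply: measurableT_comp (IH h.+1) _; apply: measurable_fun_pair => //.
exact: measurableT_comp measurable_fst measurable_fst.
Qed.

Let measurable_rollout_section k n h (s : S) :
  measurable_fun setT (fun y => rollout_ctgR k n h (s, y)).
Proof. exact: measurable_fun_pair2 (measurable_rollout_ctgR _ _ _). Qed.

Variables (cmax Vmax : R).
Hypotheses (gamma_ge0 : 0 <= gamma) (cB : forall x u, `|c x u| <= cmax)
  (cHB : forall x, `|cH x| <= Vmax).

Definition rollout_bound n h :=
  gamma ^+ h * (cmax * \sum_(l < n) gamma ^+ l + gamma ^+ n * Vmax).

Lemma rollout_boundS n h :
  rollout_bound n.+1 h = gamma ^+ h * cmax + rollout_bound n h.+1.
Proof.
rewrite /rollout_bound big_ord_recl /= expr0.
under eq_bigr do rewrite /bump /= add1n exprS.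
rewrite -mulr_sumr !exprS; ring.
Qed.

Lemma norm_rollout_ctgR_le k n h z : `|rollout_ctgR k n h z| <= rollout_bound n h.
Proof.
have normM j (b B : R) : `|b| <= B -> `|gamma ^+ j * b| <= gamma ^+ j * B.
  by move=> bB; rewrite normrM ger0_norm ?exprn_ge0 // ler_wpM2l ?exprn_ge0.
elim: n h z => [|n IH] h z /=.
  by rewrite /rollout_bound big_ord0 mulr0 add0r expr0 mul1r normM.
rewrite rollout_boundS (le_trans (ler_normD _ _)) // lerD ?normM //.
apply: (norm_Rintegral_le (prob_kernel _) (measurable_rollout_section _ _ _ _)).
by move=> y; exact: IH.
Qed.

Lemma rollout_ctgE k n h s x :
  rollout_ctg k c cH gamma (fun j => ctrl j s) n h x = (rollout_ctgR k n h (s, x))%:E.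
Proof.
elim: n h x => [|n IH] h x //=; under eq_integral do rewrite IH.
rewrite EFinD /Rintegral fineK //; apply: integrable_fin_num => //.
apply: (bounded_integrable (prob_kernel _) (measurable_rollout_section _ _ _ s)).
by move=> y; exact: norm_rollout_ctgR_le.
Qed.

Variables (kp kf : R.-pker (X * U) ~> X) (e : R).
Hypothesis tv : forall x u, (tv_dist (kp (x, u)) (kf (x, u)) <= e%:E)%E.

Definition rollout_gap_bound n :=
  2 * e * (cmax * \sum_(j < n) j%:R * gamma ^+ j + n%:R * gamma ^+ n * Vmax).

Lemma rollout_gap_boundS n h : gamma ^+ h * rollout_gap_bound n.+1 =
  gamma ^+ h.+1 * rollout_gap_bound n + 2 * rollout_bound n h.+1 * e.
Proof.
have sumS : \sum_(j < n.+1) j%:R * gamma ^+ j =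
    gamma * (\sum_(j < n) j%:R * gamma ^+ j + \sum_(j < n) gamma ^+ j).
  rewrite big_ord_recl /= mul0r add0r mulrDr !mulr_sumr -big_split.
  by apply: eq_bigr => j _ /=; rewrite /bump /= add1n -natr1 exprS; ring.
rewrite /rollout_gap_bound /rollout_bound sumS -natr1 !exprS; ring.
Qed.

Lemma rollout_ctgR_sub_le n h z :
  rollout_ctgR kp n h z - rollout_ctgR kf n h z <= gamma ^+ h * rollout_gap_bound n.
Proof.
elim: n h z => [|n IH] h z.
  by rewrite subrr /rollout_gap_bound big_ord0 !(mulr0, mul0r, addr0).
rewrite /= rollout_gap_boundS opprD addrACA subrr add0r.
set P := kp _; set Q := kf _.
set gp := fun y => rollout_ctgR kp n h.+1 (z.1, y).
set gf := fun y => rollout_ctgR kf n h.+1 (z.1, y).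
have gpB y := norm_rollout_ctgR_le kp n h.+1 (z.1, y).
have gfB y := norm_rollout_ctgR_le kf n h.+1 (z.1, y).
have step_p : \int[P]_y gp y - \int[P]_y gf y <= gamma ^+ h.+1 * rollout_gap_bound n.
  apply: (Rintegral_sub_le_cst (prob_kernel _) (measurable_rollout_section _ _ _ _)
    (measurable_rollout_section _ _ _ _) gpB gfB) => y.
  exact: IH.
have step_tv : \int[P]_y gf y - \int[Q]_y gf y <= 2 * rollout_bound n h.+1 * e.
  exact: (Rintegral_sub_le_tv (prob_kernel _) (prob_kernel _) (tv _ _)
    (measurable_rollout_section _ _ _ _) gfB).
by have := lerD step_p step_tv; rewrite addrA subrK.
Qed.
End rollout.

Lemma arithmetico_geometric_sum (R : comPzRingType) (g : R) n :
  (\sum_(j < n) j%:R * g ^+ j) * (1 - g) ^+ 2 =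
  (n%:R - 1) * g ^+ n.+1 - n%:R * g ^+ n + g.
Proof.
elim: n => [|n IH]; first by rewrite big_ord0 mul0r expr0 expr1; ring.
by rewrite big_ord_recr /= mulrDl IH -natr1 !exprS; ring.
Qed.

Lemma expected_cost_sub_le (dx du ds : measure_display) (X : measurableType dx)
    (U : measurableType du) (S : measurableType ds) (R : realType)
    (kp kf : R.-pker (X * U) ~> X) (e : R) (r : X -> U -> R) (V : X -> R)
    (gamma cmax Vmax : R) (H : nat) (pi : probability S R)
    (ctrl : nat -> S -> U) (x0 : X) :
  0 <= gamma -> (forall x u, (tv_dist (kp (x, u)) (kf (x, u)) <= e%:E)%E) ->
  measurable_fun setT (fun xu : X * U => r xu.1 xu.2) -> measurable_fun setT V ->
  (forall h, measurable_fun setT (ctrl h)) ->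
  (forall x u, `|stage_cost r x u| <= cmax) -> (forall x, `|V x| <= Vmax) ->
  (expected_cost kp r V gamma H pi ctrl x0 - expected_cost kf r V gamma H pi ctrl x0
   <= (rollout_gap_bound gamma cmax Vmax e H)%:E)%E.
Proof.
move=> g0 tv mr mV mctrl cB VB.
have mc : measurable_fun setT (fun xu : X * U => stage_cost r xu.1 xu.2).
  exact: measurable_funN.
have mcH : measurable_fun setT (terminal_cost V) by exact: measurable_funN.
have cHB x : `|terminal_cost V x| <= Vmax by rewrite normrN.
pose G k s := rollout_ctgR (stage_cost r) (terminal_cost V) gamma ctrl k H 0 (s, x0).
have mG k : measurable_fun setT (G k).
  by apply: measurable_fun_pair1; exact: measurable_rollout_ctgR.
have GB k s : `|G k s| <= rollout_bound gamma cmax Vmax H 0.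
  exact: norm_rollout_ctgR_le.
have pi1 := probability_setT pi.
have EG k : expected_cost k r V gamma H pi ctrl x0 = (\int[pi]_s G k s)%:E.
  rewrite /expected_cost.
  under eq_integral do rewrite (rollout_ctgE mc mcH mctrl g0 cB cHB).
  rewrite /Rintegral fineK //.
  exact/integrable_fin_num/(bounded_integrable pi1 (mG k)).
rewrite !EG -EFinB lee_fin.
apply: (Rintegral_sub_le_cst pi1 (mG kp) (mG kf) (GB kp) (GB kf)) => s.
have := rollout_ctgR_sub_le mc mcH mctrl g0 cB cHB tv H 0 (s, x0).
by rewrite expr0 mul1r.
Qed.

Theorem lemma1 (dx du ds : measure_display) (X : measurableType dx)
  (U : measurableType du) (S : measurableType ds) (R : realType)
  (gamma : R) (H : nat) (f fphi : R.-pker (X * U) ~> X) (eps_f : R)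
  (r : X -> U -> R) (Vzeta : X -> R) (cmax Vmax : R)
  (pi : probability S R) (ctrl : nat -> S -> U) (xt : X) :
  0 < gamma < 1 -> (1 <= H)%N ->
  (forall x u, (tv_dist (f (x, u)) (fphi (x, u)) <= eps_f%:E)%E) ->
  measurable_fun setT (fun xu : X * U => r xu.1 xu.2) ->
  measurable_fun setT Vzeta ->
  (forall h, measurable_fun setT (ctrl h)) ->
  (forall x u, `|stage_cost r x u| <= cmax) ->
  (forall x, `|Vzeta x| <= Vmax) ->
  (expected_cost fphi r Vzeta gamma H pi ctrl xt
   - expected_cost f r Vzeta gamma H pi ctrl xt
   <= (2 * cmax * (((H%:R - 1) * gamma ^+ H.+1 - H%:R * gamma ^+ H + gamma)
                   / (1 - gamma) ^+ 2) * eps_f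
       + 2 * gamma ^+ H * Vmax * H%:R * eps_f)%:E)%E.
Proof.
move=> /andP[g0 g1] _ tv mr mV mctrl cB VB.
have tvC x u : (tv_dist (fphi (x, u)) (f (x, u)) <= eps_f%:E)%E by rewrite tv_distC.
apply: le_trans (expected_cost_sub_le H pi xt (ltW g0) tvC mr mV mctrl cB VB) _.
have g1_neq0 : (1 - gamma) ^+ 2 != 0 by rewrite expf_neq0 // subr_eq0 eq_sym lt_eqF.
rewrite lee_fin /rollout_gap_bound -(arithmetico_geometric_sum gamma H) mulfK //.
by rewrite le_eqVlt; apply/orP; left; apply/eqP; ring.
Qed.
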